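(* There exists a pair of unbiased weighing matrices of order $13$ and weight $9$.
   Context: A weighing matrix of order $n$ and weight $k$ is an $n\times n$ matrix $W$ with entries in $\{1,-1,0\}$ such that $WW^T=kI_n$. Two weighing matrices $W_1,W_2$ of order $n$ and weight $k$ are unbiased if $\frac{1}{\sqrt{k}}W_1W_2^T$ is also a weighing matrix of order $n$ and weight $k$. *)

From mathcomp Require Import all_boot all_order all_algebra all_field.
Set Implicit Arguments. Unset Strict Implicit. Unset Printing Implicit Defensive.
Import GRing.Theory Num.Theory.
Local Open Scope ring_scope.

Definition weighing_matrix (n k : nat) (W : 'M[int]_n) : Prop :=
  (forall i j, W i j \in [:: 1; -1; 0]) /\ W *m W^T = (k%:R)%:M.

Definition unbiased (n k : nat) (W1 W2 : 'M[int]_n) : Prop :=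
  weighing_matrix k W1 /\ weighing_matrix k W2 /\
  exists M : 'M[int]_n, weighing_matrix k M /\
    map_mx (fun z : int => (z%:~R : algC)) M =
    (sqrtC (k%:R : algC))^-1 *: (map_mx (fun z : int => (z%:~R : algC)) (W1 *m W2^T)).

(** All three matrices are circulant. For circulant C(a), C(b) the product
    C(a) C(b)^T is the circulant of the periodic cross-correlation of a and b,
    so everything reduces to correlations of three ternary vectors of length
    13: a and b have periodic autocorrelation 9 at shift 0 and 0 elsewhere,
    and their cross-correlation is 3 m for a vector m of the same kind. As
    the weight 9 is a perfect square, C(a) C(b)^T / sqrt 9 is the integer
    weighing matrix C(m). *)

From mathcomp Require Import all_boot all_order all_algebra all_field.
Set Implicit Arguments. Unset Strict Implicit. Unset Printing Implicit Defensive.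
Import GRing.Theory Num.Theory.
Local Open Scope ring_scope.

(* [insub], hence [ord_enum] and [inord], do not reduce under [vm_compute];
   enumerating 'I_n.+1 through [inZp] on [iota] does. *)
Lemma big_ord_inZp (R : Type) (idx : R) (op : Monoid.law idx) n
    (F : 'I_n.+1 -> R) :
  \big[op/idx]_i F i = \big[op/idx]_(0 <= k < n.+1) F (inZp k).
Proof. by rewrite big_mkord; apply: eq_bigr => i _; rewrite valZpK. Qed.

Lemma all_iota_inZpP n (P : pred 'I_n.+1) :
  reflect (forall i, P i) (all (P \o inZp) (iota 0 n.+1)).
Proof.
apply: (iffP allP) => [P_iota i | P_all k _]; last exact: P_all.
by rewrite -(valZpK i); apply: P_iota; rewrite mem_iota ltn_ord.
Qed.

Section Circulant.

Variable n : nat.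

Definition circulant (R : Type) (c : 'I_n.+1 -> R) : 'M[R]_n.+1 :=
  \matrix_(i, j) c (j - i).

Lemma eq_circulant (R : Type) (c c' : 'I_n.+1 -> R) :
  c =1 c' -> circulant c = circulant c'.
Proof. by move=> eq_c; apply/matrixP => i j; rewrite !mxE eq_c. Qed.

Variable R : pzRingType.
Implicit Types a b c : 'I_n.+1 -> R.

Definition ccorr a b (d : 'I_n.+1) : R := \sum_l a (l + d) * b l.

Lemma ccorrE a b d :
  ccorr a b d = \sum_(0 <= k < n.+1) a (inZp k + d) * b (inZp k).
Proof. exact: big_ord_inZp. Qed.

Lemma circulant_mul_tr a b :
  circulant a *m (circulant b)^T = circulant (ccorr a b).
Proof.
apply/matrixP => i j; rewrite !mxE (reindex_inj (addIr j)).
by apply: eq_bigr => l _; rewrite !mxE addrK addrA.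
Qed.

Lemma circulant_scalar c (x : R) :
  (forall d, c d = x *+ (d == 0)) -> circulant c = x%:M.
Proof.
by move=> c_delta; apply/matrixP => i j; rewrite !mxE c_delta subr_eq0 eq_sym.
Qed.

Lemma circulantZ (x : R) c : circulant (fun d => x * c d) = x *: circulant c.
Proof. by apply/matrixP => i j; rewrite !mxE. Qed.

End Circulant.

Lemma circulant_weighing n (k : nat) (c : 'I_n.+1 -> int) :
  (forall d, c d \in [:: 1; -1; 0]) ->
  (forall d, ccorr c c d = k%:R *+ (d == 0)) ->
  weighing_matrix k (circulant c).
Proof.
move=> c_ternary c_autocorr; split; first by move=> i j; rewrite mxE.
by rewrite circulant_mul_tr (circulant_scalar c_autocorr).
Qed.

Lemma unbiased_of_mul_tr n (s : nat) (W1 W2 M : 'M[int]_n) : (0 < s)%N ->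
  weighing_matrix (s ^ 2) W1 -> weighing_matrix (s ^ 2) W2 ->
  weighing_matrix (s ^ 2) M -> W1 *m W2^T = s%:R *: M ->
  unbiased (s ^ 2) W1 W2.
Proof.
move=> s_gt0 W1w W2w Mw W1W2; do 2!split => //; exists M; split => //.
have -> : sqrtC ((s ^ 2)%:R : algC) = s%:R by rewrite natrX sqrCK ?ler0n.
rewrite W1W2 map_mxZ scalerA rmorph_nat mulVf ?scale1r //.
by rewrite pnatr_eq0 -lt0n.
Qed.

Definition a (d : 'I_13) : int := [:: 0; 0; 1; 0; 1; 1; 1; -1; -1; 0; 1; -1; 1]`_d.
Definition b (d : 'I_13) : int := [:: 0; 0; 1; 1; 0; 1; 0; 1; -1; 1; 1; -1; -1]`_d.
Definition m (d : 'I_13) : int := [:: 1; 0; 0; 1; -1; 0; -1; 0; 1; 1; 1; -1; 1]`_d.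

Lemma weighing_circulant_abm :
  [/\ weighing_matrix 9 (circulant a), weighing_matrix 9 (circulant b)
     & weighing_matrix 9 (circulant m)].
Proof.
split; apply: circulant_weighing => d; try apply/eqP; rewrite ?ccorrE; move: d.
all: by apply/all_iota_inZpP; rewrite ?unlock; vm_compute.
Qed.

Lemma ccorr_a_b d : ccorr a b d = 3 * m d.
Proof.
by apply/eqP; rewrite ccorrE; move: d; apply/all_iota_inZpP; rewrite unlock; vm_compute.
Qed.

Theorem proposition6p2 :
  exists W1 W2 : 'M[int]_13, unbiased 9 W1 W2.
Proof.
have [Wa Wb Wm] := weighing_circulant_abm.
exists (circulant a), (circulant b).
apply: (@unbiased_of_mul_tr _ 3 _ _ (circulant m)) => //.
by rewrite circulant_mul_tr -circulantZ; apply: eq_circulant; exact: ccorr_a_b.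
Qed.
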